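(* Let $M\geq 1$, $P=4M-3$, and let $x\in\ell(\mathbb{Z}_P)$ satisfy $x[p]=0$ for all $p=M,\ldots,4M-4$. Then for all $p=1,\ldots,2M-2$, $$\operatorname{CirAut}(x+Rx)[p]=2\operatorname{Re}\langle x,T^px\rangle+\langle x,RT^{-p}x\rangle.$$
   Context: $\ell(\mathbb{Z}_P)$ denotes the space of $P$-periodic functions $u\colon\mathbb{Z}\to\mathbb{C}$, with inner product $\langle u,v\rangle=\sum_{p\in\mathbb{Z}_P}u[p]\overline{v[p]}$. The translation operator is $(T^pu)[p']:=u[p'-p]$ and the reversal operator is $(Ru)[p]:=u[-p]$. The circular autocorrelation is $\operatorname{CirAut}(u)[p]:=\langle u,T^pu\rangle=\sum_{p'\in\mathbb{Z}_P}u[p']\overline{u[p'-p]}$. *)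

(* Complex scalars: an arbitrary numClosedFieldType C
   (e.g. algC or complex numbers), with conjugation ^* and real part 'Re. *)
From HB Require Import structures.
From mathcomp Require Import all_boot all_order all_algebra.
Set Implicit Arguments. Unset Strict Implicit. Unset Printing Implicit Defensive.
Import Order.TTheory GRing.Theory Num.Theory.
Local Open Scope ring_scope.

Section Defs.
Variable C : numClosedFieldType.

Definition periodic (P : nat) (u : int -> C) : Prop :=
  forall p : int, u (p + P%:Z) = u p.

Definition inner (P : nat) (u v : int -> C) : C :=
  \sum_(i < P) u (i%:Z) * (v (i%:Z))^*.

Definition transl (p : int) (u : int -> C) : int -> C := fun q => u (q - p).

Definition reversal (u : int -> C) : int -> C := fun q => u (- q).

Definition cirAut (P : nat) (u : int -> C) (p : int) : C :=
  inner P u (transl p u).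

End Defs.

From mathcomp Require Import all_boot all_order all_algebra.
From mathcomp Require Import zify ring.
Import Order.TTheory GRing.Theory Num.Theory.
Local Open Scope ring_scope.

(* Expanding CirAut(x + Rx)[p] gives four inner products.  Since sums over
   Z_P are invariant under shifts and reflections, <Rx, T^p Rx> is the
   conjugate of <x, T^p x>, and <x, T^p Rx> is <x, R T^-p x> pointwise.  The
   remaining cross term <Rx, T^p x> vanishes: its summands are
   x[-i] conj(x[i - p]), and both factors can only be nonzero when i ≡ -r and
   i ≡ s + p mod P with r, s in [0, M), which forces r + s + p ≡ 0 although
   0 < r + s + p < P. *)

Section PeriodicSums.
Context {C : numClosedFieldType} {P : nat}.
Hypothesis P_gt0 : (0 < P)%N.
Implicit Types (g u v w x : int -> C) (k q : int).

Lemma periodicMn g : periodic P g ->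
  forall q (n : nat), g (q + (n * P)%N%:Z) = g q.
Proof.
move=> gP q; elim=> [|n IHn]; first by rewrite mul0n addr0.
by rewrite mulSn PoszD addrCA addrC gP IHn.
Qed.

Lemma periodic_eq g : periodic P g ->
  forall q k (n : int), q = k + n * P%:Z -> g q = g k.
Proof.
move=> gP q k [n|n] ->; first by rewrite -PoszM periodicMn.
rewrite -[LHS](periodicMn _ gP _ n.+1); congr g.
by rewrite NegzE PoszM mulNr subrK.
Qed.

Lemma periodic_shift g k : periodic P g -> periodic P (fun q => g (q + k)).
Proof. by move=> gP q; rewrite -addrAC gP. Qed.

Lemma sum_periodic_shift1 g : periodic P g ->
  \sum_(i < P) g (i%:Z + 1) = \sum_(i < P) g i%:Z.
Proof.
move=> gP; rewrite -(prednK P_gt0) big_ord_recr big_ord_recl /= addrC; congr (_ + _).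
  by rewrite (periodic_eq _ gP _ 0 1) //; lia.
by apply: eq_bigr => i _; congr g; rewrite /bump /=; lia.
Qed.

Lemma sum_periodic_shift g k : periodic P g ->
  \sum_(i < P) g (i%:Z + k) = \sum_(i < P) g i%:Z.
Proof.
have shift_nat (h : int -> C) (n : nat) : periodic P h ->
    \sum_(i < P) h (i%:Z + n%:Z) = \sum_(i < P) h i%:Z.
  elim: n h => [|n IHn] h hP; first by under eq_bigr do rewrite addr0.
  rewrite -(IHn h hP) -(sum_periodic_shift1 _ (periodic_shift _ n%:Z hP)).
  by apply: eq_bigr => i _; congr h; lia.
move=> gP; case: k => [n|n]; first exact: shift_nat.
rewrite -(shift_nat _ n.+1 (periodic_shift _ (Negz n) gP)).
by apply: eq_bigr => i _; congr g; rewrite NegzE; lia.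
Qed.

Lemma sum_periodic_reflect g : periodic P g ->
  \sum_(i < P) g (- i%:Z) = \sum_(i < P) g i%:Z.
Proof.
move=> gP; rewrite (reindex_inj rev_ord_inj) -(sum_periodic_shift _ (1 - P%:Z) gP).
by apply: eq_bigr => i _; congr g; have := ltn_ord i; rewrite /=; lia.
Qed.

Lemma innerDl u v w :
  inner P (fun q => u q + v q) w = inner P u w + inner P v w.
Proof. by rewrite /inner -big_split; apply: eq_bigr => i _; rewrite mulrDl. Qed.

Lemma innerDr u v w :
  inner P u (fun q => v q + w q) = inner P u v + inner P u w.
Proof. by rewrite /inner -big_split; apply: eq_bigr => i _; rewrite rmorphD mulrDr. Qed.

Lemma inner_transl_reversal k u v :
  inner P u (transl k (reversal v)) = inner P u (reversal (transl (- k) v)).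
Proof. by apply: eq_bigr => i _; rewrite /transl /reversal opprD. Qed.

Lemma inner_reversal_transl_reversal u k : periodic P u ->
  inner P (reversal u) (transl k (reversal u)) = (inner P u (transl k u))^*.
Proof.
move=> uP; rewrite /inner /transl /reversal.
have gP : periodic P (fun q => u q * (u (q + k))^*).
  by move=> q; rewrite -addrAC !uP.
transitivity (\sum_(i < P) u i%:Z * (u (i%:Z + k))^*).
  rewrite -(sum_periodic_reflect _ gP).
  by apply: eq_bigr => i _; rewrite opprB addrC.
rewrite -(sum_periodic_shift _ (- k) gP) rmorph_sum.
by apply: eq_bigr => i _; rewrite subrK rmorphM /= conjCK mulrC.
Qed.

Lemma inner_reversal_transl_eq0 (M p : nat) x : periodic P x ->
  (forall i : nat, (M <= i < P)%N -> x i%:Z = 0) ->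
  (0 < p)%N -> (2 * M - 1 + p <= P)%N ->
  inner P (reversal x) (transl p%:Z x) = 0.
Proof.
move=> xP x_supp p_gt0 pP; rewrite /inner /transl /reversal.
have gP : periodic P (fun q => x (- q) * (x (q - p%:Z))^*).
  move=> q /=; rewrite addrAC xP; congr (_ * _).
  by apply: (periodic_eq _ xP _ _ (-1)); lia.
rewrite -(sum_periodic_reflect _ gP); apply: big1 => i _ /=.
rewrite opprK; have := ltn_ord i; case: (ltnP i M) => [iM iP | Mi iP].
  rewrite [x (- _ - _)](periodic_eq _ xP _ (P - i - p)%N%:Z (-1)); last by lia.
  by rewrite (x_supp (P - i - p)%N) ?conjC0 ?mulr0 //; lia.
by rewrite x_supp ?mul0r //; apply/andP.
Qed.

End PeriodicSums.

Theorem lemma1 (C : numClosedFieldType) (M : nat) (hM : (1 <= M)%N)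
  (x : int -> C) (hper : periodic (4 * M - 3) x)
  (hsupp : forall p : nat, (M <= p <= 4 * M - 4)%N -> x (p%:Z) = 0) :
  forall p : nat, (1 <= p <= 2 * M - 2)%N ->
    cirAut (4 * M - 3) (fun q => x q + reversal x q) (p%:Z)
    = 2 * 'Re (inner (4 * M - 3) x (transl (p%:Z) x))
      + inner (4 * M - 3) x (reversal (transl (- (p%:Z)) x)).
Proof.
move=> p /andP[p_gt0 p_le].
have P_gt0 : (0 < 4 * M - 3)%N by lia.
have x_supp (i : nat) : (M <= i < 4 * M - 3)%N -> x i%:Z = 0.
  by move=> /andP[Mi iP]; apply: hsupp; lia.
have cross0 := inner_reversal_transl_eq0 P_gt0 _ _ _ hper x_supp p_gt0 (ltac:(lia)).
rewrite /cirAut innerDl !innerDr inner_transl_reversal cross0.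
rewrite (inner_reversal_transl_reversal P_gt0 _ _ hper) ReE.
by field.
Qed.
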